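(* Let $G$ be a group, $H$ an amenable normal subgroup of $G$, and $\rho\colon G\to G/H$ the natural homomorphism. Suppose $U_1,U_2\subseteq G$ are finite subsets such that for every pair of finite subsets $F_1,F_2\subseteq G$ we have $|F_1U_1\cup F_2U_2|\geq|F_1|+|F_2|$. Let $U_i'=\rho(U_i)$. Then for every pair of finite subsets $F_1',F_2'\subseteq G/H$ we have $|F_1'U_1'\cup F_2'U_2'|\geq|F_1'|+|F_2'|$.
   Context: $FU=\{fu: f\in F, u\in U\}$. *)

From mathcomp Require Import all_boot finmap.
Set Implicit Arguments. Unset Strict Implicit. Unset Printing Implicit Defensive.
Local Open Scope fset_scope.

Definition is_group (G : Type) (mul : G -> G -> G) (one : G) (inv : G -> G) : Prop :=
  [/\ associative mul, left_id one mul & left_inverse one inv mul].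

Definition is_hom (G Q : Type) (mulG : G -> G -> G) (mulQ : Q -> Q -> Q)
  (rho : G -> Q) : Prop := forall x y, rho (mulG x y) = mulQ (rho x) (rho y).

Definition setmul (G : choiceType) (mul : G -> G -> G) (F U : {fset G}) : {fset G} :=
  [fset mul f u | f in F, u in U].

(* Amenability of a (discrete) subgroup H, via the Følner condition:
   for every finite K ⊆ H and every ε = 1/n > 0 there is a nonempty finite
   F ⊆ H with |kF Δ F| < ε |F| for all k ∈ K. *)
Definition folner_amenable (G : choiceType) (mul : G -> G -> G) (H : G -> Prop) : Prop :=
  forall K : {fset G}, (forall k, k \in K -> H k) ->
  forall n : nat, 0 < n ->
  exists F : {fset G},
    [/\ F != fset0, (forall x, x \in F -> H x) &
        forall k, k \in K ->
          (#|` setmul mul [fset k] F `\` F| + #|` F `\` setmul mul [fset k] F|) * n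
            < #|` F|].

From mathcomp Require Import all_boot finmap zify.
Local Open Scope fset_scope.

(* Lift [F1'], [F2'] along a section [lift] of [rho] to [S1], [S2], and put
   [F = E^-1] for a Følner set [E] of [H]. As [F] lies in the kernel of [rho]
   and [rho] is injective on [Si], [|F Si| = |E| |Fi'|], so the hypothesis
   gives [|E| (|F1'| + |F2'|) <= |F T|] with [T = S1 U1 ∪ S2 U2]. Writing each
   [x ∈ T] as [z * lift (rho x)] with [z ∈ H] gives [|F T| <= |F Z| |W|],
   where [W] is the right-hand side in [G/H] and [Z] a finite subset of [H].
   Finally [|F Z| = |K E|] with [K = Z^-1], and the Følner condition with
   parameter [n] yields [|K E| <= (1 + |K|/n) |E|]; for [n > |W| |K|] this
   leaves [|F1'| + |F2'| < |W| + 1]. *)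

Set Implicit Arguments.
Unset Strict Implicit.
Unset Printing Implicit Defensive.

Section GroupFacts.
Variables (T : Type) (mul : T -> T -> T) (one : T) (inv : T -> T).
Hypothesis group_T : is_group mul one inv.

Lemma mulgA : associative mul. Proof. by case: group_T. Qed.
Lemma mul1g : left_id one mul. Proof. by case: group_T. Qed.
Lemma mulVg x : mul (inv x) x = one. Proof. by case: group_T => _ _ ->. Qed.
Lemma mulKg x y : mul (inv x) (mul x y) = y. Proof. by rewrite mulgA mulVg mul1g. Qed.

Lemma mulgV x : mul x (inv x) = one.
Proof. by rewrite -[LHS](mulKg (inv x)) (mulgA (inv x) x) mulVg mul1g mulVg. Qed.

Lemma mulg1 : right_id one mul. Proof. by move=> x; rewrite -(mulVg x) mulgA mulgV mul1g. Qed.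
Lemma mulgK x y : mul (mul y x) (inv x) = y. Proof. by rewrite -mulgA mulgV mulg1. Qed.
Lemma mulgKV x y : mul (mul y (inv x)) x = y. Proof. by rewrite -mulgA mulVg mulg1. Qed.

Lemma mulIg x : injective (mul^~ x).
Proof. by move=> a b /(congr1 (mul^~ (inv x))) /=; rewrite !mulgK. Qed.

Lemma mul_eq1_invg a b : mul a b = one -> a = inv b.
Proof. by move=> ab1; rewrite -(mulgK b a) ab1 mul1g. Qed.

Lemma invg1 : inv one = one. Proof. by rewrite -[RHS](mulVg one) mulg1. Qed.

Lemma invgK : involutive inv.
Proof. by move=> x; rewrite -[RHS](mulKg (inv x)) mulVg mulg1. Qed.

Lemma invMg x y : inv (mul x y) = mul (inv y) (inv x).
Proof. by apply/esym/mul_eq1_invg; rewrite mulgA -(mulgA _ _ x) mulVg mulg1 mulVg. Qed.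

End GroupFacts.

Section SetMul.
Variables (T : choiceType) (mul : T -> T -> T).
Local Notation "A ** B" := (setmul mul A B) (at level 40).

Lemma setmulP (A B : {fset T}) x :
  reflect (exists2 a, a \in A & exists2 b, b \in B & x = mul a b) (x \in A ** B).
Proof. exact: imfset2P. Qed.

Lemma mem_setmul (A B : {fset T}) a b : a \in A -> b \in B -> mul a b \in A ** B.
Proof. by move=> aA bB; apply/setmulP; exists a => //; exists b. Qed.

Lemma setmul0l (B : {fset T}) : fset0 ** B = fset0.
Proof. by apply/fsetP => x; rewrite inE; apply/setmulP => -[a]; rewrite inE. Qed.

Lemma setmulU1l a (A B : {fset T}) : (a |` A) ** B = mul a @` B `|` A ** B.
Proof.
apply/fsetP => x; rewrite in_fsetU; apply/setmulP/orP.
  by case=> y /fset1UP [->|yA] [z zB ->]; [left; rewrite in_imfset | right; apply: mem_setmul].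
case=> [/imfsetP [z zB ->]|/setmulP [y yA [z zB ->]]].
  by exists a; rewrite ?fset1U1 //; exists z.
by exists y; rewrite ?fset1Ur //; exists z.
Qed.

Lemma setmul0r (A : {fset T}) : A ** fset0 = fset0.
Proof. by apply/fsetP => x; rewrite inE; apply/setmulP => -[a _ [b]]; rewrite inE. Qed.

Lemma setmulU1r b (A B : {fset T}) : A ** (b |` B) = mul^~ b @` A `|` A ** B.
Proof.
apply/fsetP => x; rewrite in_fsetU; apply/setmulP/orP.
  by case=> y yA [z /fset1UP [->|zB] ->]; [left; rewrite in_imfset | right; apply: mem_setmul].
case=> [/imfsetP [y yA ->]|/setmulP [y yA [z zB ->]]].
  by exists y => //; exists b; rewrite ?fset1U1.
by exists y => //; exists z; rewrite ?fset1Ur.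
Qed.

Lemma setmulUr (A B C : {fset T}) : A ** (B `|` C) = A ** B `|` A ** C.
Proof.
apply/fsetP => x; rewrite in_fsetU; apply/setmulP/orP.
  by case=> a aA [b]; rewrite in_fsetU => /orP [] bB ->; [left | right]; apply: mem_setmul.
by case=> /setmulP [a aA [b bB ->]]; exists a => //; exists b; rewrite // in_fsetU bB ?orbT.
Qed.

Lemma setmulA : associative mul -> forall A B C : {fset T}, A ** B ** C = A ** (B ** C).
Proof.
move=> mulA A B C; apply/fsetP => x; apply/setmulP/setmulP.
  case=> _ /setmulP [a aA [b bB ->]] [c cC ->].
  by exists a => //; exists (mul b c); rewrite ?mulA ?mem_setmul.
case=> a aA [_ /setmulP [b bB [c cC ->]] ->].
by exists (mul a b); rewrite ?mem_setmul //; exists c; rewrite ?mulA.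
Qed.

Lemma card_setmul_le (A B : {fset T}) : #|` A ** B| <= #|` A| * #|` B|.
Proof.
elim/fset1U_rect: A => [|a A aA IH]; first by rewrite setmul0l cardfs0.
rewrite setmulU1l cardfsU1 aA mulSn (leq_trans (leq_card_fsetU _ _)) //.
by rewrite leq_add ?leq_imfset_card.
Qed.

Lemma setmul1l a (B : {fset T}) : [fset a] ** B = mul a @` B.
Proof. by rewrite -[[fset a]]fsetU0 setmulU1l setmul0l fsetU0. Qed.

(* Each translate [k E] adds at most [|E| / n] new points to [E]. *)
Lemma card_folner_setmul (E K : {fset T}) n :
  (forall k, k \in K ->
     (#|` [fset k] ** E `\` E| + #|` E `\` [fset k] ** E|) * n < #|` E|) ->
  n * #|` E `|` K ** E| <= (n + #|` K|) * #|` E|.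
Proof.
elim/fset1U_rect: K => [|k K kK IH] folnerK.
  by rewrite setmul0l fsetU0 cardfs0 addn0.
have new_k : n * #|` mul k @` E `\` E| <= #|` E|.
  rewrite -setmul1l mulnC ltnW // (leq_ltn_trans _ (folnerK k (fset1U1 _ _))) //.
  by rewrite leq_mul2r leq_addr orbT.
have cover : E `|` (k |` K) ** E `<=` (mul k @` E `\` E) `|` (E `|` K ** E).
  apply/fsubsetP => x; rewrite setmulU1l !in_fsetU.
  case/or3P=> [->|kx|->]; rewrite ?orbT //.
  by case xE: (x \in E); rewrite ?orbT // in_fsetD xE kx.
have IHK := IH (fun k' k'K => folnerK k' (fset1Ur _ k'K)).
rewrite (leq_trans (leq_mul (leqnn n) (fsubset_leq_card cover))) //.
rewrite (leq_trans (leq_mul (leqnn n) (leq_card_fsetU _ _))) //.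
by rewrite cardfsU1 kK mulnDr add1n addnS mulSn leq_add.
Qed.

End SetMul.

Section GroupSetMul.
Variables (T : choiceType) (mul : T -> T -> T) (one : T) (inv : T -> T).
Hypothesis group_T : is_group mul one inv.
Local Notation "A ** B" := (setmul mul A B) (at level 40).

Lemma card_imfset_invg (A : {fset T}) : #|` inv @` A| = #|` A|.
Proof. exact/card_imfset/(can_inj (invgK group_T)). Qed.

Lemma imfset_invg_setmul (A B : {fset T}) : inv @` (A ** B) = inv @` B ** inv @` A.
Proof.
apply/fsetP => x; apply/imfsetP/setmulP.
  case=> _ /setmulP [a aA [b bB ->]] ->.
  exists (inv b); first exact: in_imfset.
  by exists (inv a); rewrite ?in_imfset // (invMg group_T).
case=> _ /imfsetP [b bB ->] [_ /imfsetP [a aA ->] ->].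
by exists (mul a b); rewrite ?mem_setmul ?(invMg group_T).
Qed.

Lemma card_setmul_invg (A B : {fset T}) : #|` inv @` A ** B| = #|` inv @` B ** A|.
Proof.
rewrite -card_imfset_invg imfset_invg_setmul -imfset_comp.
by rewrite (eq_imfset _ (invgK group_T) (fun=> erefl)) imfset_id.
Qed.

End GroupSetMul.

Section QuotientMap.
Variables (G Q : choiceType).
Variables (mulG : G -> G -> G) (oneG : G) (invG : G -> G).
Variables (mulQ : Q -> Q -> Q) (oneQ : Q) (invQ : Q -> Q).
Hypotheses (group_G : is_group mulG oneG invG) (group_Q : is_group mulQ oneQ invQ).
Variable rho : G -> Q.
Hypothesis rhoM : is_hom mulG mulQ rho.
Local Notation "A ** B" := (setmul mulG A B) (at level 40).

Lemma hom1 : rho oneG = oneQ.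
Proof.
apply: (mulIg group_Q (x := rho oneG)).
by rewrite -rhoM (mul1g group_G) (mul1g group_Q).
Qed.

Lemma homV g : rho (invG g) = invQ (rho g).
Proof. by apply: (mul_eq1_invg group_Q); rewrite -rhoM (mulVg group_G) hom1. Qed.

Lemma imfset_hom_setmul (A B : {fset G}) :
  rho @` (A ** B) = setmul mulQ (rho @` A) (rho @` B).
Proof.
apply/fsetP => q; apply/imfsetP/setmulP.
  case=> _ /setmulP [a aA [b bB ->]] ->.
  by exists (rho a); rewrite ?in_imfset //; exists (rho b); rewrite ?in_imfset.
case=> _ /imfsetP [a aA ->] [_ /imfsetP [b bB ->] ->].
by exists (mulG a b); rewrite ?mem_setmul.
Qed.

Lemma card_setmul_ker (F S : {fset G}) :
  {in F, forall f, rho f = oneQ} -> {in S &, injective rho} ->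
  #|` F ** S| = #|` F| * #|` S|.
Proof.
move=> F_ker; elim/fset1U_rect: S => [|s S sS IH] inj_S.
  by rewrite setmul0r cardfs0 muln0.
have rho_fS f x : f \in F -> rho (mulG f x) = rho x.
  by move=> fF; rewrite rhoM F_ker // (mul1g group_Q).
have disjoint_s : [disjoint mulG^~ s @` F & F ** S].
  apply/fdisjointP => _ /imfsetP [f fF ->]; apply/setmulP => -[f' f'F [x xS]].
  move=> /(congr1 rho); rewrite !rho_fS // => /inj_S eq_sx.
  by move: sS; rewrite eq_sx ?fset1U1 ?fset1Ur ?xS.
have := cardfsUI (mulG^~ s @` F) (F ** S).
rewrite (eqP disjoint_s) cardfs0 addn0 -setmulU1r => ->.
rewrite card_in_imfset => [|f f' _ _ /=]; last exact: (mulIg group_G (x := s)).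
rewrite IH => [|x y xS yS]; last exact: inj_S (fset1Ur _ _) (fset1Ur _ _).
by rewrite cardfsU1 sS mulnS.
Qed.

Variable lift : Q -> G.
Hypothesis liftK : cancel lift rho.

Definition ker_part x := mulG x (invG (lift (rho x))).

Lemma ker_part_ker x : rho (ker_part x) = oneQ.
Proof. by rewrite rhoM homV liftK (mulgV group_Q). Qed.

Lemma imfset_liftK (X : {fset Q}) : rho @` (lift @` X) = X.
Proof. by rewrite -imfset_comp (eq_imfset _ liftK (fun=> erefl)) imfset_id. Qed.

Lemma card_setmul_ker_lift (F : {fset G}) (X : {fset Q}) :
  {in F, forall f, rho f = oneQ} -> #|` F ** (lift @` X)| = #|` F| * #|` X|.
Proof.
move=> F_ker; rewrite card_setmul_ker // ?card_imfset //; first exact: can_inj liftK.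
by move=> _ _ /imfsetP [q _ ->] /imfsetP [q' _ ->]; rewrite !liftK => ->.
Qed.

Lemma card_setmul_le_ker_part (F T : {fset G}) :
  #|` F ** T| <= #|` F ** (ker_part @` T)| * #|` rho @` T|.
Proof.
have cover : F ** T `<=` F ** (ker_part @` T) ** (lift @` (rho @` T)).
  apply/fsubsetP => _ /setmulP [f fF [x xT ->]].
  have -> : mulG f x = mulG (mulG f (ker_part x)) (lift (rho x)).
    by rewrite -(mulgA group_G) (mulgKV group_G).
  by rewrite !mem_setmul // !in_imfset.
apply: leq_trans (fsubset_leq_card cover) _.
by rewrite (leq_trans (card_setmul_le _ _ _)) // leq_mul2l leq_imfset_card orbT.
Qed.

End QuotientMap.

Lemma surj_section (A B : choiceType) (f : A -> B) :
  (forall b, exists a, f a = b) -> {g : B -> A | cancel g f}.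
Proof.
move=> f_surj; have f_surjb b : exists a, f a == b by have [a <-] := f_surj b; exists a.
by exists (fun b => xchoose (f_surjb b)) => b; apply/eqP/(xchooseP (f_surjb b)).
Qed.

Lemma folner_ratio_bound (a w e k M : nat) :
  0 < e -> e * a <= M * w -> (w * k).+1 * M <= ((w * k).+1 + k) * e -> a <= w.
Proof.
move=> e_gt0 aM MN; rewrite leqNgt; apply/negP => w_lt_a.
have : e * w.+1 * (w * k).+1 <= w * (((w * k).+1 + k) * e).
  apply: (leq_trans (leq_mul (leq_trans (leq_mul (leqnn e) w_lt_a) aM) (leqnn _))).
  by rewrite mulnAC mulnC leq_mul2l (mulnC M) MN orbT.
nia.
Qed.

Unset Implicit Arguments.

Theorem lemma3p4 (G Q : choiceType)
  (mulG : G -> G -> G) (oneG : G) (invG : G -> G)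
  (mulQ : Q -> Q -> Q) (oneQ : Q) (invQ : Q -> Q)
  (hG : is_group mulG oneG invG) (hQ : is_group mulQ oneQ invQ)
  (H : G -> Prop) (rho : G -> Q)
  (rho_hom : is_hom mulG mulQ rho)
  (rho_surj : forall q : Q, exists g : G, rho g = q)
  (rho_ker : forall g : G, rho g = oneQ <-> H g)
  (H_amen : folner_amenable mulG H)
  (U1 U2 : {fset G})
  (hU : forall F1 F2 : {fset G},
      #|` F1| + #|` F2| <= #|` setmul mulG F1 U1 `|` setmul mulG F2 U2|) :
  forall F1' F2' : {fset Q},
    #|` F1'| + #|` F2'| <=
      #|` setmul mulQ F1' (rho @` U1) `|` setmul mulQ F2' (rho @` U2)|.
Proof.
move=> F1' F2'.
have [lift liftK] := surj_section rho_surj.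
set W := _ `|` _.
pose T := setmul mulG (lift @` F1') U1 `|` setmul mulG (lift @` F2') U2.
have rho_T : rho @` T = W.
  by rewrite imfsetU !(imfset_hom_setmul rho_hom) !(imfset_liftK liftK).
pose K := invG @` (ker_part mulG invG rho lift @` T).
have K_H k : k \in K -> H k.
  case/imfsetP=> _ /imfsetP [x _ ->] ->; apply/rho_ker.
  by rewrite (homV hG hQ rho_hom) (ker_part_ker hG hQ rho_hom liftK) (invg1 hQ).
have [E [E_neq0 E_H E_folner]] := H_amen K K_H (#|` W| * #|` K|).+1 (ltn0Sn _).
pose F := invG @` E.
have F_ker : {in F, forall f, rho f = oneQ}.
  move=> _ /imfsetP [e eE ->].
  by rewrite (homV hG hQ rho_hom) (proj2 (rho_ker e) (E_H e eE)) (invg1 hQ).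
have lower : #|` E| * (#|` F1'| + #|` F2'|) <= #|` setmul mulG F T|.
  have := hU (setmul mulG F (lift @` F1')) (setmul mulG F (lift @` F2')).
  rewrite !(card_setmul_ker_lift hG hQ rho_hom liftK) // (card_imfset_invg hG) -mulnDr.
  by rewrite !(setmulA (mulgA hG)) -setmulUr.
have upper : #|` setmul mulG F T| <= #|` E `|` setmul mulG K E| * #|` W|.
  rewrite -rho_T (leq_trans (card_setmul_le_ker_part hG rho lift F T)) //.
  by rewrite leq_mul2r (card_setmul_invg hG) fsubset_leq_card ?fsubsetUr ?orbT.
apply: folner_ratio_bound (card_folner_setmul E_folner).
  by rewrite cardfs_gt0.
exact: leq_trans lower upper.
Qed.
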